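(* Every $(2P_3,C_4,C_6,C_7,\text{3-pentagon})$-free graph is $(\text{3PC},\text{proper wheel})$-free, i.e. it contains no induced subgraph that is a theta, a pyramid, a prism, or a proper wheel.
   Context: Graphs are finite, simple, nonnull. A graph is $(H_1,\dots,H_m)$-free if it has no induced subgraph isomorphic to any $H_i$. $P_k$, $C_k$ are the path and cycle on $k$ vertices; $2P_3$ is two disjoint copies of $P_3$. The 3-pentagon is the graph on vertices $a,b_1,b_2,b_3,c_1,c_2,c_3$ where $a$ is adjacent to each $b_i$ and to no $c_i$, $\{b_1,b_2,b_3\}$ is stable, $\{c_1,c_2,c_3\}$ is a clique, and $b_ic_j$ is an edge iff $i=j$. A hole is an induced cycle on at least four vertices. A theta is any subdivision of $K_{2,3}$ (including $K_{2,3}$). A pyramid is any subdivision of $K_4$ in which one triangle remains unsubdivided and, of the remaining three edges, at least two are subdivided at least once. A prism is any subdivision of $\overline{C_6}$ (the complement of $C_6$, including $\overline{C_6}$ itself) in which the two triangles remain unsubdivided. A 3PC is a theta, pyramid, or prism. A wheel is a graph consisting of a hole and an additional vertex with at least three neighbours in the hole; it is universal if that vertex is adjacent to all vertices of the hole, a twin wheel if it is adjacent to exactly three consecutive vertices of the hole and no others, and proper if it is neither universal nor a twin wheel. *)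

From mathcomp Require Import all_boot.
Set Implicit Arguments. Unset Strict Implicit. Unset Printing Implicit Defensive.

Definition simple_graph (T : finType) (e : rel T) : Prop :=
  symmetric e /\ irreflexive e.

Definition induced_copy (H : finType) (eH : rel H) (T : finType) (e : rel T) : Prop :=
  exists f : H -> T, injective f /\ forall u v, eH u v = e (f u) (f v).

Definition edges_rel (n : nat) (E : seq (nat * nat)) : rel 'I_n :=
  fun u v => ((nat_of_ord u, nat_of_ord v) \in E) || ((nat_of_ord v, nat_of_ord u) \in E).

Definition cycle_rel (k : nat) : rel 'I_k :=
  fun u v => (u.+1 %% k == v) || (v.+1 %% k == u).

Definition twoP3_rel : rel 'I_6 := @edges_rel 6 [:: (0,1); (1,2); (3,4); (4,5)].

(* 3-pentagon on 'I_7 : a = 0, b_i = i (i=1,2,3), c_i = i+3. *)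
Definition three_pentagon_rel : rel 'I_7 :=
  @edges_rel 7 [:: (0,1); (0,2); (0,3); (4,5); (4,6); (5,6); (1,4); (2,5); (3,6)].

Definition path_adj (T : eqType) (p : seq T) (x y : T) : bool :=
  ((x, y) \in zip p (behead p)) || ((y, x) \in zip p (behead p)).

(* Theta: nonadjacent a, b joined by three paths a - p_i - b with nonempty
   interiors p_i, pairwise disjoint; the subgraph induced on all these
   vertices has exactly the path edges (= induced subdivision of K_{2,3}). *)
Definition is_theta (T : finType) (e : rel T) (a b : T) (p1 p2 p3 : seq T) : Prop :=
  let V := a :: b :: p1 ++ p2 ++ p3 in
  [/\ uniq V, p1 != [::], p2 != [::], p3 != [::] &
      {in V &, forall x y, e x y =
         [|| path_adj (a :: rcons p1 b) x y, path_adj (a :: rcons p2 b) x y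
           | path_adj (a :: rcons p3 b) x y]}].

(* Pyramid: triangle b1 b2 b3, apex a, paths a - p_i - b_i, at least two of
   which have length >= 2 (nonempty interior). *)
Definition is_pyramid (T : finType) (e : rel T) (a b1 b2 b3 : T) (p1 p2 p3 : seq T) : Prop :=
  let V := a :: b1 :: b2 :: b3 :: p1 ++ p2 ++ p3 in
  [/\ uniq V,
      2 <= (p1 != [::]) + (p2 != [::]) + (p3 != [::]) &
      {in V &, forall x y, e x y =
         [|| path_adj [:: b1; b2; b3; b1] x y,
             path_adj (a :: rcons p1 b1) x y, path_adj (a :: rcons p2 b2) x y
           | path_adj (a :: rcons p3 b3) x y]}].

Definition is_prism (T : finType) (e : rel T) (a1 a2 a3 b1 b2 b3 : T) (p1 p2 p3 : seq T) : Prop :=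
  let V := a1 :: a2 :: a3 :: b1 :: b2 :: b3 :: p1 ++ p2 ++ p3 in
  [/\ uniq V &
      {in V &, forall x y, e x y =
         [|| path_adj [:: a1; a2; a3; a1] x y, path_adj [:: b1; b2; b3; b1] x y,
             path_adj (a1 :: rcons p1 b1) x y, path_adj (a2 :: rcons p2 b2) x y
           | path_adj (a3 :: rcons p3 b3) x y]}].

Definition has_theta (T : finType) (e : rel T) : Prop :=
  exists a b p1 p2 p3, is_theta e a b p1 p2 p3.
Definition has_pyramid (T : finType) (e : rel T) : Prop :=
  exists a b1 b2 b3 p1 p2 p3, is_pyramid e a b1 b2 b3 p1 p2 p3.
Definition has_prism (T : finType) (e : rel T) : Prop :=
  exists a1 a2 a3 b1 b2 b3 p1 p2 p3, is_prism e a1 a2 a3 b1 b2 b3 p1 p2 p3.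

Definition is_hole (T : finType) (e : rel T) (c : seq T) : Prop :=
  [/\ uniq c, 4 <= size c &
      {in c &, forall x y, e x y = (next c x == y) || (next c y == x)}].

Definition nbrs_in (T : finType) (e : rel T) (x : T) (c : seq T) : {set T} :=
  [set z | (z \in c) && e x z].

Definition is_wheel (T : finType) (e : rel T) (c : seq T) (x : T) : Prop :=
  [/\ is_hole e c, x \notin c & 3 <= #|nbrs_in e x c|].

Definition universal_wheel (T : finType) (e : rel T) (c : seq T) (x : T) : Prop :=
  is_wheel e c x /\ {in c, forall z, e x z}.

Definition twin_wheel (T : finType) (e : rel T) (c : seq T) (x : T) : Prop :=
  is_wheel e c x /\
  exists2 y, y \in c & nbrs_in e x c = [set y; next c y; next c (next c y)].

Definition proper_wheel (T : finType) (e : rel T) (c : seq T) (x : T) : Prop :=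
  [/\ is_wheel e c x, ~ universal_wheel e c x & ~ twin_wheel e c x].

Definition has_proper_wheel (T : finType) (e : rel T) : Prop :=
  exists c x, proper_wheel e c x.

(* In a (2P3, C4, C6, C7)-free graph every hole has length 5, since C_k with
   k >= 8 contains an induced 2P3.  Any two of the three paths of a theta,
   pyramid or prism close up into a hole, which therefore has length 5.  For a
   theta this forces the interiors of any two paths to have 3 vertices in
   total, for a prism 1 vertex in total: both impossible by parity.  For a
   pyramid it forces one interior vertex on every path, and the pyramid is then
   the 3-pentagon.  In a wheel the hole is a C5; if z is a non-neighbour of the
   centre, C4-freeness forbids the centre to see both neighbours of z, so its
   at least three neighbours are three consecutive vertices of the hole. *)

From mathcomp Require Import all_boot zify.
Set Implicit Arguments. Unset Strict Implicit. Unset Printing Implicit Defensive.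

Lemma next_nth_uniq (T : eqType) (x0 : T) (c : seq T) i : uniq c -> i < size c ->
  next c (nth x0 c i) = nth x0 c (i.+1 %% size c).
Proof.
move=> uc ic; rewrite next_nth mem_nth // index_uniq //.
case: c uc ic => [//|z c] _ /= ic; have [->|ne] := eqVneq i (size c).
  by rewrite modnn /= nth_default.
by rewrite modn_small /=; [apply: set_nth_default|]; lia.
Qed.

Lemma uniq_catl_perm (T : eqType) (s r t : seq T) : perm_eq (s ++ r) t -> uniq t -> uniq s.
Proof. by move=> /perm_uniq <-; rewrite cat_uniq => /andP []. Qed.

Section PathAdj.
Variable T : eqType.
Implicit Types (u v w x y : T) (s p q : seq T).

Lemma path_adjC s x y : path_adj s x y = path_adj s y x.
Proof. by rewrite /path_adj orbC. Qed.

Lemma path_adj2 u v x y :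
  path_adj [:: u; v] x y = ((x == u) && (y == v)) || ((x == v) && (y == u)).
Proof. by rewrite /path_adj /= !inE !xpair_eqE [(y == u) && _]andbC. Qed.

Lemma path_adj2C u v x y : path_adj [:: u; v] x y = path_adj [:: v; u] x y.
Proof. by rewrite !path_adj2 orbC. Qed.

Lemma path_adj_cons2 u v s x y :
  path_adj [:: u, v & s] x y = path_adj [:: u; v] x y || path_adj (v :: s) x y.
Proof.
by rewrite /path_adj /= !inE -!orbA; congr (_ || _); rewrite orbCA.
Qed.

Lemma path_adj_cat s u t x y :
  path_adj (rcons s u ++ t) x y = path_adj (rcons s u) x y || path_adj (u :: t) x y.
Proof.
elim: s => [|v s IH] //=.
case: s IH => [|w s] IH /=; first by rewrite path_adj_cons2.
by rewrite path_adj_cons2 IH [in RHS]path_adj_cons2 orbA.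
Qed.

Lemma path_adj_rcons2 s u v x y :
  path_adj (rcons (rcons s u) v) x y = path_adj (rcons s u) x y || path_adj [:: u; v] x y.
Proof. by rewrite -cats1 path_adj_cat. Qed.

Lemma path_adj_rev s x y : path_adj (rev s) x y = path_adj s x y.
Proof.
elim: s => [|v [|w s] IH] //.
rewrite !rev_cons path_adj_rcons2 -rev_cons IH.
by rewrite [in RHS]path_adj_cons2 orbC path_adj2C.
Qed.

Lemma path_adj_triangle u v w x y :
  path_adj [:: u; v; w; u] x y =
  [|| path_adj [:: u; v] x y, path_adj [:: v; w] x y | path_adj [:: w; u] x y].
Proof. by rewrite path_adj_cons2 [path_adj [:: v; w; u] _ _]path_adj_cons2. Qed.

Lemma path_adj3 u v w x y :
  path_adj [:: u; v; w] x y = path_adj [:: u; v] x y || path_adj [:: v; w] x y.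
Proof. exact: path_adj_cons2. Qed.

Lemma path_adj_triangleC u v w x y :
  path_adj [:: v; u; w; v] x y = path_adj [:: u; v; w; u] x y.
Proof.
rewrite !path_adj_triangle (path_adj2C v u) (path_adj2C w v) (path_adj2C u w).
by congr (_ || _); rewrite orbC.
Qed.

Lemma path_adj_triangle_rev u v w x y :
  path_adj [:: u; w; v; u] x y = path_adj [:: u; v; w; u] x y.
Proof. exact: (path_adj_rev [:: u; v; w; u]). Qed.

Lemma path_adj_mem s x y : path_adj s x y -> (x \in s) && (y \in s).
Proof.
elim: s => [|v [|w s] IH] //; rewrite path_adj_cons2 => /orP [|/IH].
  by rewrite path_adj2 !inE => /orP [] /andP [/eqP -> /eqP ->]; rewrite !eqxx ?orbT.
by case/andP=> hx hy; rewrite in_cons hx orbT in_cons hy orbT.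
Qed.

Lemma path_adj_neq s x y : uniq s -> path_adj s x y -> x != y.
Proof.
elim: s => [|v [|w s] IH] //= /andP [vs ws].
rewrite path_adj_cons2 => /orP [|]; last exact: IH.
rewrite path_adj2 => /orP [] /andP [/eqP -> /eqP ->]; apply: contraNneq vs => ->;
  by rewrite inE eqxx.
Qed.

Lemma path_adj_outside u s x y :
  uniq (u :: s) -> x \notin s -> y \notin s -> path_adj (u :: s) x y = false.
Proof.
move=> us xs ys; apply/negP => uv; have := path_adj_neq us uv.
case/andP: (path_adj_mem uv); rewrite !in_cons (negbTE xs) (negbTE ys) !orbF.
by move=> /eqP -> /eqP ->; rewrite eqxx.
Qed.

Lemma path_adj_glue u v p q x y :
  path_adj (rcons (u :: p ++ v :: rev q) u) x y =
  path_adj (u :: rcons p v) x y || path_adj (u :: rcons q v) x y.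
Proof.
rewrite rcons_cons rcons_cat /= -cat_cons -cat_rcons path_adj_cat.
by rewrite -rev_cons -rev_rcons path_adj_rev.
Qed.

Lemma path_adj_interior u v p x y : uniq (u :: rcons p v) -> p != [::] ->
  path_adj (u :: rcons p v) x y -> (x \in p) || (y \in p).
Proof.
move=> uP pn xy; apply: contraTT isT; rewrite negb_or => /andP [xp yp].
have not_uv : ~~ path_adj (u :: rcons p v) u v.
  case: p pn uP {xy xp yp} => [//|w p] _.
  rewrite rcons_cons !cons_uniq => /andP [uP /andP [wP _]].
  rewrite !in_cons !mem_rcons !in_cons !negb_or in uP wP.
  case/and3P: uP => uw uv up; case/andP: wP => wv _.
  rewrite path_adj_cons2 path_adj2 eqxx (eq_sym v) (negbTE wv) (negbTE uw) /=.
  apply: contraNN up => /path_adj_mem /andP [].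
  by rewrite in_cons mem_rcons in_cons (negbTE uw) (negbTE uv).
have xny := path_adj_neq uP xy; case/andP: (path_adj_mem xy) => xL yL.
move: xL yL xny xy not_uv.
rewrite !in_cons !mem_rcons !in_cons (negbTE xp) (negbTE yp) !orbF.
by case/orP=> /eqP-> /orP [] /eqP->; rewrite ?eqxx // ?(path_adjC _ v u) => _ ->.
Qed.

Lemma zip_mem_index s t x y : uniq s -> size s = size t ->
  ((x, y) \in zip s t) = (x \in s) && (y == nth y t (index x s)).
Proof.
elim: s t => [|a s IH] [|b t] //= /andP [ns us] [st].
rewrite !in_cons xpair_eqE IH //.
by have [->|_] := eqVneq x a; rewrite ?(negbTE ns) /= ?orbF.
Qed.

Lemma path_adj_closed u s x y : uniq (u :: s) -> x \in u :: s -> y \in u :: s ->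
  path_adj (rcons (u :: s) u) x y = (next (u :: s) x == y) || (next (u :: s) y == x).
Proof.
move=> us xs ys.
have zip_next z w : z \in u :: s ->
    ((z, w) \in zip (rcons (u :: s) u) (rcons s u)) = (next (u :: s) z == w).
  move=> zs; rewrite -cats1 -[rcons s u]cats0 zip_cat ?size_rcons // cats0.
  rewrite zip_mem_index ?size_rcons // zs next_nth zs eq_sym nth_rcons.
  have := index_mem z (u :: s); rewrite zs ltnS leq_eqVlt => /orP [/eqP ->|lt].
    by rewrite ltnn eqxx nth_default.
  by rewrite lt (set_nth_default u).
by rewrite /path_adj [behead _]/= !zip_next.
Qed.

End PathAdj.

Lemma induced_copy_trans (H K T : finType) (eH : rel H) (eK : rel K) (e : rel T) :
  induced_copy eH eK -> induced_copy eK e -> induced_copy eH e.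
Proof.
move=> [f [f_inj fE]] [g [g_inj gE]]; exists (g \o f); split.
  exact: inj_comp.
by move=> u v; rewrite fE gE.
Qed.

Lemma induced_copy_nth n (eH : rel 'I_n) (T : finType) (e : rel T) x0 (L : seq T) :
  uniq L -> size L = n ->
  (forall i j : 'I_n, eH i j = e (nth x0 L i) (nth x0 L j)) -> induced_copy eH e.
Proof.
move=> uL sL LE; exists (fun i : 'I_n => nth x0 L i); split => // i j /eqP.
by rewrite nth_uniq ?sL // => /eqP /val_inj.
Qed.

Lemma twoP3_sub_long_cycle n : 8 <= n -> induced_copy twoP3_rel (@cycle_rel n).
Proof.
case: n => [//|n] n8; pose pos := [:: 0; 1; 2; 4; 5; 6].
have posE (k : 'I_6) : (inord (nth 0 pos k) : 'I_n.+1) = nth 0 pos k :> nat.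
  by rewrite inordK //; case: k => [[|[|[|[|[|[|k]]]]]] hk] //=; lia.
exists (fun k : 'I_6 => inord (nth 0 pos k)); split.
  move=> i j /(congr1 (@nat_of_ord _)); rewrite !posE => ij; apply/val_inj.
  by move: i j ij => [[|[|[|[|[|[|i]]]]]] hi] [[|[|[|[|[|[|j]]]]]] hj].
have small k : k < 8 -> k %% n.+1 = k by move=> ?; rewrite modn_small //; lia.
move=> i j; rewrite /cycle_rel !posE.
by move: i j => [[|[|[|[|[|[|i]]]]]] hi] [[|[|[|[|[|[|j]]]]]] hj] //=; rewrite ?small.
Qed.

Section Graph.
Variables (T : finType) (e : rel T).

Lemma is_hole_closed_path u s : uniq (u :: s) -> 3 <= size s ->
  {in u :: s &, forall x y, e x y = path_adj (rcons (u :: s) u) x y} ->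
  is_hole e (u :: s).
Proof. by move=> us s3 eP; split=> // x y xs ys; rewrite eP // path_adj_closed. Qed.

Lemma hole_nth_adj c x0 i j : is_hole e c -> i < size c -> j < size c ->
  e (nth x0 c i) (nth x0 c j) = (i.+1 %% size c == j) || (j.+1 %% size c == i).
Proof.
move=> [uc c4 eP] ic jc; have mod_lt k : k %% size c < size c by rewrite ltn_mod; lia.
by rewrite eP ?mem_nth // !next_nth_uniq // !nth_uniq.
Qed.

Lemma hole_induced_cycle c : is_hole e c -> induced_copy (@cycle_rel (size c)) e.
Proof.
case: c => [[]//|x0 c] hc; have [uc _ _] := hc.
by apply: (induced_copy_nth (x0 := x0) (L := x0 :: c)) => // i j; rewrite hole_nth_adj.
Qed.

Lemma hole_rot n c : is_hole e c -> is_hole e (rot n c).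
Proof.
case=> uc c4 eP; split; rewrite ?rot_uniq ?size_rot // => x y.
by rewrite !mem_rot => xc yc; rewrite !next_rot // eP.
Qed.

Lemma nbrs_in_rot x n c : nbrs_in e x (rot n c) = nbrs_in e x c.
Proof. by apply/setP => z; rewrite !inE mem_rot. Qed.

Lemma nbrs_in_filter x c : nbrs_in e x c = [set z in filter (e x) c].
Proof. by apply/setP => z; rewrite !inE mem_filter andbC. Qed.

Lemma card_nbrs_in x c : uniq c -> #|nbrs_in e x c| = count (e x) c.
Proof.
by move=> uc; rewrite nbrs_in_filter cardsE (card_uniqP (filter_uniq _ uc)) size_filter.
Qed.

Lemma is_wheel_rot n c x : is_wheel e c x -> is_wheel e (rot n c) x.
Proof. by case=> hc xc n3; split; rewrite ?mem_rot ?nbrs_in_rot //; apply: hole_rot. Qed.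

Lemma twin_wheel_rot n c x : twin_wheel e c x -> twin_wheel e (rot n c) x.
Proof.
case=> wh [y yc nE]; have [[uc _ _] _ _] := wh; split; first exact: is_wheel_rot.
by exists y; rewrite ?mem_rot // nbrs_in_rot !next_rot.
Qed.

Lemma C4_free_common_nbrs_adj u v w x :
  simple_graph e -> ~ induced_copy (@cycle_rel 4) e ->
  u != w -> ~~ e u w -> e u v -> e v w -> e u x -> e x w -> v != x -> e v x.
Proof.
move=> [sym irr] noC4 uw uNw uv vw ux xw vx; apply: contraT => vNx; case: noC4.
have ne y z : e y z -> y != z by apply: contraTneq => ->; rewrite irr.
apply: (induced_copy_nth (x0 := u) (L := [:: u; v; w; x])) => [|//|i j].
  by rewrite /= !inE !negb_or uw vx (ne _ _ uv) (ne _ _ ux) (ne _ _ vw) eq_sym (ne _ _ xw).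
rewrite /cycle_rel; move: (uNw) (vNx); rewrite sym [e v x]sym => wNu xNv.
by case: i j => [[|[|[|[|i]]]] hi] [[|[|[|[|j]]]] hj] //=;
  rewrite ?irr ?(negbTE uNw) ?(negbTE vNx) ?(negbTE wNu) ?(negbTE xNv) // sym.
Qed.

Lemma is_theta_swap12 a b p1 p2 p3 :
  is_theta e a b p1 p2 p3 -> is_theta e a b p2 p1 p3.
Proof.
case=> uV n1 n2 n3 eV.
have VV : perm_eq [:: a, b & p2 ++ p1 ++ p3] [:: a, b & p1 ++ p2 ++ p3].
  by rewrite !perm_cons perm_catCA.
split=> //; first by rewrite (perm_uniq VV).
by move=> x y xV yV; rewrite eV -?(perm_mem VV) // orbCA.
Qed.

Lemma is_theta_swap23 a b p1 p2 p3 :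
  is_theta e a b p1 p2 p3 -> is_theta e a b p1 p3 p2.
Proof.
case=> uV n1 n2 n3 eV.
have VV : perm_eq [:: a, b & p1 ++ p3 ++ p2] [:: a, b & p1 ++ p2 ++ p3].
  by rewrite !perm_cons perm_cat2l perm_catC.
split=> //; first by rewrite (perm_uniq VV).
by move=> x y xV yV; rewrite eV -?(perm_mem VV) //; congr (_ || _); rewrite orbC.
Qed.

Lemma is_pyramid_swap12 a b1 b2 b3 p1 p2 p3 :
  is_pyramid e a b1 b2 b3 p1 p2 p3 -> is_pyramid e a b2 b1 b3 p2 p1 p3.
Proof.
case=> uV n eV.
have VV : perm_eq [:: a, b2, b1, b3 & p2 ++ p1 ++ p3] [:: a, b1, b2, b3 & p1 ++ p2 ++ p3].
  by apply/permP => P; rewrite /= !count_cat /=; lia.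
split; first by rewrite (perm_uniq VV).
  by rewrite (addnC (p2 != [::])).
move=> x y xV yV; rewrite eV -?(perm_mem VV) // (path_adj_triangleC b1 b2).
by congr (_ || _); rewrite orbCA.
Qed.

Lemma is_pyramid_swap23 a b1 b2 b3 p1 p2 p3 :
  is_pyramid e a b1 b2 b3 p1 p2 p3 -> is_pyramid e a b1 b3 b2 p1 p3 p2.
Proof.
case=> uV n eV.
have VV : perm_eq [:: a, b1, b3, b2 & p1 ++ p3 ++ p2] [:: a, b1, b2, b3 & p1 ++ p2 ++ p3].
  by apply/permP => P; rewrite /= !count_cat /=; lia.
split; first by rewrite (perm_uniq VV).
  by rewrite addnAC.
move=> x y xV yV; rewrite eV -?(perm_mem VV) // (path_adj_triangle_rev b1 b2).
by congr [|| _, _ | _]; rewrite orbC.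
Qed.

Lemma is_prism_swap12 a1 a2 a3 b1 b2 b3 p1 p2 p3 :
  is_prism e a1 a2 a3 b1 b2 b3 p1 p2 p3 -> is_prism e a2 a1 a3 b2 b1 b3 p2 p1 p3.
Proof.
case=> uV eV.
have VV : perm_eq [:: a2, a1, a3, b2, b1, b3 & p2 ++ p1 ++ p3]
                 [:: a1, a2, a3, b1, b2, b3 & p1 ++ p2 ++ p3].
  by apply/permP => P; rewrite /= !count_cat /=; lia.
split; first by rewrite (perm_uniq VV).
move=> x y xV yV; rewrite eV -?(perm_mem VV) //.
rewrite (path_adj_triangleC a1 a2) (path_adj_triangleC b1 b2).
by congr [|| _, _ | _]; rewrite orbCA.
Qed.

Lemma is_prism_swap23 a1 a2 a3 b1 b2 b3 p1 p2 p3 :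
  is_prism e a1 a2 a3 b1 b2 b3 p1 p2 p3 -> is_prism e a1 a3 a2 b1 b3 b2 p1 p3 p2.
Proof.
case=> uV eV.
have VV : perm_eq [:: a1, a3, a2, b1, b3, b2 & p1 ++ p3 ++ p2]
                 [:: a1, a2, a3, b1, b2, b3 & p1 ++ p2 ++ p3].
  by apply/permP => P; rewrite /= !count_cat /=; lia.
split; first by rewrite (perm_uniq VV).
move=> x y xV yV; rewrite eV -?(perm_mem VV) //.
rewrite (path_adj_triangle_rev a1 a2) (path_adj_triangle_rev b1 b2).
by congr [|| _, _, _ | _]; rewrite orbC.
Qed.

Lemma three_pentagon_of_pyramid a b1 b2 b3 m1 m2 m3 :
  is_pyramid e a b1 b2 b3 [:: m1] [:: m2] [:: m3] -> induced_copy three_pentagon_rel e.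
Proof.
case=> uV _ eV; set L := [:: a; m1; m2; m3; b1; b2; b3].
have LV : perm_eq L [:: a, b1, b2, b3 & [:: m1] ++ [:: m2] ++ [:: m3]].
  by apply/permP => P; rewrite /=; lia.
have uL : uniq L by rewrite (perm_uniq LV).
apply: (induced_copy_nth (x0 := a) (L := L)) => // i j.
(* Naming every vertex by its index in L turns vertex comparisons into index
   comparisons. *)
pose f k := nth a L k; have fE k l : k < 7 -> l < 7 -> (f k == f l) = (k == l).
  by move=> k7 l7; rewrite nth_uniq.
have [i7 j7] := (ltn_ord i, ltn_ord j).
rewrite eV -?(perm_mem LV) ?mem_nth // -/(f i) -/(f j) path_adj_triangle /=.
rewrite !path_adj3 !path_adj2 -[a]/(f 0) -[m1]/(f 1) -[m2]/(f 2) -[m3]/(f 3).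
rewrite -[b1]/(f 4) -[b2]/(f 5) -[b3]/(f 6) !fE //.
by case: i j i7 j7 => [[|[|[|[|[|[|[|i]]]]]]] ?] [[|[|[|[|[|[|[|j]]]]]]] ?].
Qed.

Section Free.
Hypotheses (e_simple : simple_graph e) (no_2P3 : ~ induced_copy twoP3_rel e)
  (no_C4 : ~ induced_copy (@cycle_rel 4) e) (no_C6 : ~ induced_copy (@cycle_rel 6) e)
  (no_C7 : ~ induced_copy (@cycle_rel 7) e)
  (no_3pentagon : ~ induced_copy three_pentagon_rel e).

Lemma hole_size c : is_hole e c -> size c = 5.
Proof.
move=> hc; have copy := hole_induced_cycle hc; have [_ c4 _] := hc.
have [c8|] := leqP 8 (size c).
  by case: no_2P3; apply: induced_copy_trans (twoP3_sub_long_cycle c8) copy.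
(* sizes 4, 6 and 7 are excluded by no_C4, no_C6 and no_C7 *)
by move: (size c) c4 copy => [|[|[|[|[|[|[|[|n]]]]]]]].
Qed.

Lemma two_paths_hole_size u v p q : uniq (u :: v :: p ++ q) -> 2 <= size p + size q ->
  {in u :: v :: p ++ q &, forall x y,
     e x y = path_adj (u :: rcons p v) x y || path_adj (u :: rcons q v) x y} ->
  size p + size q = 3.
Proof.
move=> uW pq2 eW; set c := u :: p ++ v :: rev q.
have cW : perm_eq c (u :: v :: p ++ q).
  by apply/permP => P; rewrite /= !count_cat /= count_rev; lia.
have : size c = 5.
  apply: hole_size; apply: is_hole_closed_path; first by rewrite (perm_uniq cW).
    by rewrite size_cat /= size_rev addnS ltnS.
  by move=> x y xc yc; rewrite eW -?(perm_mem cW) // path_adj_glue.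
by rewrite /c /= size_cat /= size_rev addnS => -[].
Qed.

Lemma theta_paths_size a b p1 p2 p3 : is_theta e a b p1 p2 p3 -> size p1 + size p2 = 3.
Proof.
case=> uV p1n p2n p3n eV; set W := a :: b :: p1 ++ p2.
have : uniq (W ++ p3) by rewrite /W /= -catA.
rewrite cat_uniq => /and3P [uW /hasPn p3W _].
have u3 : uniq (a :: rcons p3 b).
  apply: (uniq_catl_perm (r := p1 ++ p2)) uV; apply/permP => P.
  by rewrite /= -cats1 !count_cat /=; lia.
apply: two_paths_hole_size uW _ _; first by rewrite -[2]/(1 + 1) leq_add // lt0n size_eq0.
move=> x y xW yW; have inV z : z \in W -> z \in a :: b :: p1 ++ p2 ++ p3.
  by rewrite catA -!cat_cons mem_cat => ->.
have P3_xy : path_adj (a :: rcons p3 b) x y = false.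
  by apply/negP => /(path_adj_interior u3 p3n) /orP [] /p3W /negP.
by rewrite eV ?inV // P3_xy orbF.
Qed.

Lemma pyramid_paths_size a b1 b2 b3 p1 p2 p3 : is_pyramid e a b1 b2 b3 p1 p2 p3 ->
  0 < size p1 + size p2 -> size p1 + size p2 = 2.
Proof.
case=> uV _ eV p12; set W := a :: b2 :: rcons p1 b1 ++ p2.
have WV : perm_eq (W ++ rcons p3 b3) [:: a, b1, b2, b3 & p1 ++ p2 ++ p3].
  by apply/permP => P; rewrite /W /= -!cats1 !count_cat /= ?count_cat; lia.
have u3 : uniq (a :: rcons p3 b3).
  apply: (uniq_catl_perm (r := [:: b1, b2 & p1 ++ p2])) uV; apply/permP => P.
  by rewrite /= -cats1 !count_cat /= count_cat; lia.
move: uV; rewrite -(perm_uniq WV) cat_uniq => /and3P [uW /hasPn p3W _].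
have := two_paths_hole_size uW; rewrite size_rcons addSn ltnS => /(_ p12) hole.
apply: succn_inj; apply: hole => x y xW yW.
have [xR yR] : x \notin rcons p3 b3 /\ y \notin rcons p3 b3.
  by split; [apply: contraTN xW | apply: contraTN yW] => /p3W.
have [xb3 yb3] : x != b3 /\ y != b3.
  by split; [apply: contraNneq xR | apply: contraNneq yR] => ->; rewrite mem_rcons mem_head.
rewrite eV -?(perm_mem WV) ?mem_cat ?xW ?yW // (path_adj_outside u3 xR yR) orbF.
rewrite path_adj_triangle (path_adj2 b2 b3) (path_adj2 b3 b1) (negbTE xb3) (negbTE yb3).
rewrite !andbF !orbF -[a :: rcons (rcons p1 b1) b2]/(rcons (rcons (a :: p1) b1) b2).
by rewrite path_adj_rcons2 orbCA orbA.
Qed.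

Lemma prism_paths_size a1 a2 a3 b1 b2 b3 p1 p2 p3 :
  is_prism e a1 a2 a3 b1 b2 b3 p1 p2 p3 -> size p1 + size p2 = 1.
Proof.
case=> uV eV; set W := a1 :: b2 :: rcons p1 b1 ++ a2 :: p2.
have WV : perm_eq (W ++ a3 :: rcons p3 b3) [:: a1, a2, a3, b1, b2, b3 & p1 ++ p2 ++ p3].
  by apply/permP => P; rewrite /W /= -!cats1 !count_cat /= ?count_cat /=; lia.
move: uV; rewrite -(perm_uniq WV) cat_uniq => /and3P [uW /hasPn p3W u3].
have := two_paths_hole_size uW; rewrite size_rcons /= addSn addnS => /(_ isT) hole.
do 2 apply: succn_inj; apply: hole => x y xW yW.
have [xR yR] : x \notin a3 :: rcons p3 b3 /\ y \notin a3 :: rcons p3 b3.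
  by split; [apply: contraTN xW | apply: contraTN yW] => /p3W.
move: xR yR; rewrite !in_cons !negb_or => /andP [xa3 xR] /andP [ya3 yR].
have [xb3 yb3] : x != b3 /\ y != b3.
  by split; [apply: contraNneq xR | apply: contraNneq yR] => ->; rewrite mem_rcons mem_head.
rewrite eV -?(perm_mem WV) ?mem_cat ?xW ?yW // (path_adj_outside u3 xR yR) orbF.
rewrite !path_adj_triangle (path_adj2 a2 a3) (path_adj2 a3 a1).
rewrite (path_adj2 b2 b3) (path_adj2 b3 b1).
rewrite (negbTE xa3) (negbTE ya3) (negbTE xb3) (negbTE yb3) !andbF !orbF.
rewrite -[a1 :: rcons (rcons p1 b1) b2]/(rcons (rcons (a1 :: p1) b1) b2) path_adj_rcons2.
rewrite -[a1 :: rcons (a2 :: p2) b2]/([:: a1, a2 & rcons p2 b2]).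
rewrite (path_adj_cons2 a1 a2 (rcons p2 b2)).
by case: (path_adj [:: a1; a2] x y) (path_adj [:: b1; b2] x y) => [] []; rewrite ?orbT ?orbF.
Qed.

Lemma theta_free : ~ has_theta e.
Proof.
move=> [a [b [p1 [p2 [p3 th]]]]]; have := theta_paths_size th.
have := theta_paths_size (is_theta_swap23 th).
have := theta_paths_size (is_theta_swap23 (is_theta_swap12 th)).
lia.
Qed.

Lemma pyramid_paths_single a b1 b2 b3 p1 p2 p3 : is_pyramid e a b1 b2 b3 p1 p2 p3 ->
  [/\ size p1 = 1, size p2 = 1 & size p3 = 1].
Proof.
move=> py; have [_ two _] := py; have := pyramid_paths_size py.
have := pyramid_paths_size (is_pyramid_swap23 py).
have := pyramid_paths_size (is_pyramid_swap23 (is_pyramid_swap12 py)).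
move: two; rewrite -!size_eq0.
by case: (size p1) (size p2) (size p3) => [|n1] [|n2] [|n3] //= _ h23 h13 h12; split; lia.
Qed.

Lemma pyramid_free : ~ has_pyramid e.
Proof.
move=> [a [b1 [b2 [b3 [p1 [p2 [p3 py]]]]]]]; have [] := pyramid_paths_single py.
case: p1 py => [|m1 []] //; case: p2 => [|m2 []] //; case: p3 => [|m3 []] // py _ _ _.
exact: no_3pentagon (three_pentagon_of_pyramid py).
Qed.

Lemma prism_free : ~ has_prism e.
Proof.
move=> [a1 [a2 [a3 [b1 [b2 [b3 [p1 [p2 [p3 pr]]]]]]]]]; have := prism_paths_size pr.
have := prism_paths_size (is_prism_swap23 pr).
have := prism_paths_size (is_prism_swap23 (is_prism_swap12 pr)).
lia.
Qed.

Lemma C5_wheel_twin x z v1 v2 v3 v4 : is_wheel e [:: z; v1; v2; v3; v4] x ->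
  ~~ e x z -> twin_wheel e [:: z; v1; v2; v3; v4] x.
Proof.
move=> wh xNz; have [hc xc n3] := wh; have [uc _ _] := hc.
have v4z : e v4 z by rewrite (hole_nth_adj z hc (i := 4) (j := 0)).
have zv1 : e z v1 by rewrite (hole_nth_adj z hc (i := 0) (j := 1)).
have v4Nv1 : ~~ e v4 v1 by rewrite (hole_nth_adj z hc (i := 4) (j := 1)).
have v4v1 : v4 != v1 by rewrite (nth_uniq z (s := [:: z; v1; v2; v3; v4]) (i := 4) (j := 1)).
have zx : z != x by apply: contraNneq xc => <-; rewrite mem_head.
have not_both : ~~ (e x v1 && e x v4).
  have [sym _] := e_simple; apply/andP => -[xv1 xv4]; case/negP: xNz.
  rewrite sym; apply: (C4_free_common_nbrs_adj e_simple no_C4 v4v1) => //.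
  by rewrite sym.
have next_succ i : i.+1 < 5 ->
    next [:: z; v1; v2; v3; v4] (nth z [:: z; v1; v2; v3; v4] i) =
    nth z [:: z; v1; v2; v3; v4] i.+1.
  by move=> i5; rewrite next_nth_uniq ?modn_small ?(ltnW i5).
rewrite card_nbrs_in //= (negbTE xNz) in n3; split=> //.
case E1: (e x v1); case E2: (e x v2); case E3: (e x v3); case E4: (e x v4);
  rewrite ?E1 ?E2 ?E3 ?E4 // in n3 not_both.
- exists v1; first by rewrite !inE eqxx orbT.
  rewrite (next_succ 1) // (next_succ 2) // nbrs_in_filter /= (negbTE xNz) E1 E2 E3 E4.
  by apply/setP => w; rewrite !inE orbA.
- exists v2; first by rewrite !inE eqxx !orbT.
  rewrite (next_succ 2) // (next_succ 3) // nbrs_in_filter /= (negbTE xNz) E1 E2 E3 E4.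
  by apply/setP => w; rewrite !inE orbA.
Qed.

Lemma proper_wheel_free : ~ has_proper_wheel e.
Proof.
move=> [c [x [wh not_univ not_twin]]].
have /allPn [z zc xNz] : ~~ all (e x) c.
  by apply/negP => /allP x_univ; apply: not_univ.
have [k s cE] := rot_to zc; apply: not_twin.
rewrite -(rotK k c) /rotr; apply: twin_wheel_rot; rewrite cE.
have whs : is_wheel e (z :: s) x by rewrite -cE; apply: is_wheel_rot.
have [hs _ _] := whs; have := hole_size hs.
by case: s {cE} hs whs => [|v1 [|v2 [|v3 [|v4 [|]]]]] // _ whs _; apply: C5_wheel_twin.
Qed.
End Free.
End Graph.

Theorem proposition6p1 (T : finType) (e : rel T) :
  simple_graph e ->
  ~ induced_copy twoP3_rel e ->
  ~ induced_copy (@cycle_rel 4) e ->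
  ~ induced_copy (@cycle_rel 6) e ->
  ~ induced_copy (@cycle_rel 7) e ->
  ~ induced_copy three_pentagon_rel e ->
  [/\ ~ has_theta e, ~ has_pyramid e, ~ has_prism e & ~ has_proper_wheel e].
Proof.
move=> e_simple no_2P3 no_C4 no_C6 no_C7 no_3pentagon; split.
- exact: theta_free.
- exact: pyramid_free.
- exact: prism_free.
- exact: proper_wheel_free.
Qed.
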